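(* For every $n\ge1$ and every choice of coefficients there exist real polynomials $\alpha,\beta,\gamma,\delta$ in $h$ with $\deg\alpha,\deg\delta\le[\frac{n-1}{2}]$, $\deg\beta\le[\frac{n-2}{2}]$, $\deg\gamma\le[\frac n2]$, and a real polynomial $\phi$ of degree at most $2n+\frac{3+(-1)^n}{2}$, such that for all $h\in(0,+\infty)$, $$M(h)=\alpha(h)I_{0,1}(h)+\beta(h)I_{1,1}(h)+\gamma(h)J_{0,0}(h)+\delta(h)J_{0,1}(h)+\phi\big(u(h)\big).$$ (Here a polynomial of negative degree bound is the zero polynomial.)
   Context: Fix an integer $n\ge 1$ and real coefficients $a^k_{i,j},b^k_{i,j}$ ($k=1,2,3,4$; $i+j\le n$), $f_k=\sum_{0\le i+j\le n}a^k_{i,j}x^iy^j$, $g_k=\sum_{0\le i+j\le n}b^k_{i,j}x^iy^j$. For $h>0$ let $u(h)=\sqrt{(\sqrt{1+4h}-1)/2}$ (so $u^4+u^2=h$), $\Gamma_h$ the circle $x^2+y^2=h$, and $A=(u,u^2)$, $B=(u,-u^2)$, $C=(-u,-u^2)$, $D=(-u,u^2)$. Let $\widehat{AB},\widehat{BC},\widehat{CD},\widehat{DA}$ be the arcs of $\Gamma_h$ traversed clockwise from $A$ to $B$ (through $(\sqrt h,0)$), $B$ to $C$ (through $(0,-\sqrt h)$), $C$ to $D$ (through $(-\sqrt h,0)$), $D$ to $A$ (through $(0,\sqrt h)$). Define $$M(h)=\int_{\widehat{AB}}g_1dx-f_1dy+\int_{\widehat{BC}}g_2dx-f_2dy+\int_{\widehat{CD}}g_3dx-f_3dy+\int_{\widehat{DA}}g_4dx-f_4dy.$$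 For integers $i,j\ge0$, $I_{i,j}(h)=\int_{\widehat{AB}}x^iy^jdx$, $J_{i,j}(h)=\int_{\widehat{BC}}x^iy^jdx$. $[p]$ is the integer part of $p$. *)

From Stdlib Require Import Reals Lra ZArith List Classical ClassicalEpsilon.
Open Scope R_scope.

(** The Riemann integral of f over [a,b] (a <= b intended): the common value of
    [RiemannInt pr] for every integrability proof [pr]; 0 if f is not integrable. *)
Lemma RI_ex (f : R -> R) (a b : R) :
  exists l : R, forall pr : Riemann_integrable f a b, RiemannInt pr = l.
Proof.
  destruct (classic (exists pr : Riemann_integrable f a b, True)) as [[pr0 _]|H].
  - exists (RiemannInt pr0). intro pr. apply RiemannInt_P5.
  - exists 0. intro pr. exfalso. apply H. exists pr. exact I.
Qed.

Definition RI (f : R -> R) (a b : R) : R :=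
  proj1_sig (constructive_indefinite_description _ (RI_ex f a b)).

Definition oint (f : R -> R) (a b : R) : R :=
  if Rle_dec a b then RI f a b else - RI f b a.

Definition poly2 (n : nat) (c : nat -> nat -> R) (x y : R) : R :=
  sum_f_R0 (fun i => sum_f_R0 (fun j => c i j * x ^ i * y ^ j) (n - i)) n.

(** Univariate polynomial given by its coefficient list (constant term first);
    a list of length <= d+1 represents a polynomial of degree <= d
    (the empty list is the zero polynomial). *)
Fixpoint peval (l : list R) (x : R) : R :=
  match l with
  | nil => 0
  | c :: l' => c + x * peval l' x
  end.

Definition deg_le (l : list R) (d : Z) : Prop :=
  (Z.of_nat (length l) <= d + 1)%Z.

Definition u (h : R) : R := sqrt ((sqrt (1 + 4 * h) - 1) / 2).

(** With a := atan (u h), the points are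
    A at angle a, B at -a, C at -PI + a, D at -PI - a (= PI - a mod 2PI),
    and A again at -2PI + a; clockwise traversal = decreasing angle. *)
Definition cx (h t : R) : R := sqrt h * cos t.
Definition cy (h t : R) : R := sqrt h * sin t.
Definition dcx (h t : R) : R := - (sqrt h * sin t).
Definition dcy (h t : R) : R := sqrt h * cos t.

Definition angA (h : R) : R := atan (u h).

Definition arc_int (P Q : R -> R -> R) (h t0 t1 : R) : R :=
  oint (fun t => P (cx h t) (cy h t) * dcx h t + Q (cx h t) (cy h t) * dcy h t) t0 t1.

Definition arcAB (h : R) := (angA h, - angA h).
Definition arcBC (h : R) := (- angA h, - PI + angA h).
Definition arcCD (h : R) := (- PI + angA h, - PI - angA h).
Definition arcDA (h : R) := (- PI - angA h, - 2 * PI + angA h).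

Definition on_arc (arc : R -> R * R) (P Q : R -> R -> R) (h : R) : R :=
  arc_int P Q h (fst (arc h)) (snd (arc h)).

(** M(h), with a k i j = a^k_{i,j} and b k i j = b^k_{i,j} (k = 1..4). *)
Definition M (n : nat) (a b : nat -> nat -> nat -> R) (h : R) : R :=
  let f k := poly2 n (a k) in
  let g k := poly2 n (b k) in
  let mf k := (fun x y => - f k x y) in
  on_arc arcAB (g 1%nat) (mf 1%nat) h + on_arc arcBC (g 2%nat) (mf 2%nat) h
  + on_arc arcCD (g 3%nat) (mf 3%nat) h + on_arc arcDA (g 4%nat) (mf 4%nat) h.

Definition zero2 : R -> R -> R := fun _ _ => 0.

Definition Iij (i j : nat) (h : R) : R :=
  on_arc arcAB (fun x y => x ^ i * y ^ j) zero2 h.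
Definition Jij (i j : nat) (h : R) : R :=
  on_arc arcBC (fun x y => x ^ i * y ^ j) zero2 h.

From Stdlib Require Import Reals ZArith List Lra Lia FunctionalExtensionality ClassicalEpsilon.
From Coquelicot Require Import Coquelicot.
Open Scope R_scope.

(** Parametrise Gamma_h by t |-> (sqrt h cos t, sqrt h sin t), so that dx = -y dt and
    dy = x dt.  On an arc [t0, t1] the line integral in M(h) is then a linear
    combination of the integrals K(p,q) = int x^p y^q dt with p+q = d <= n+1.
    Integration by parts and x^2 + y^2 = h give reduction formulas expressing K(p,q)
    through h K(p',q') with p'+q' = d-2, plus a boundary term x^a y^b at the endpoints.
    The endpoints are the corners (+-u, +-u^2), so boundary terms are monomials in u(h),
    and h = u^4 + u^2 converts powers of h into polynomials in u.  The recursion ends at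
    K(1,0), K(0,1), K(1,1) (boundary terms) and at h K(0,0) = h (t1 - t0), which is again
    expressed through K(0,2) = -I_{0,1} (resp. -J_{0,1}).  Hence M(h) is
    alpha(h) I_{0,1} + delta(h) J_{0,1} + phi(u(h)) with the stated degree bounds, and
    beta = gamma = 0. *)

Definition mon (h : R) (p q : nat) (t : R) : R := cx h t ^ p * cy h t ^ q.

Lemma mon_derive h p q t :
  is_derive (mon h p q) t (INR q * mon h (S p) (pred q) t - INR p * mon h (pred p) (S q) t).
Proof. unfold mon, cx, cy. auto_derive; [auto |]. simpl. ring. Qed.

Lemma ex_RInt_mon h p q t0 t1 : ex_RInt (mon h p q) t0 t1.
Proof.
  apply (@ex_RInt_continuous R_CompleteNormedModule). intros t _.
  apply (@ex_derive_continuous R_AbsRing R_NormedModule). eexists. apply mon_derive.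
Qed.

Lemma RInt_lin (f g : R -> R) c d t0 t1 :
  ex_RInt f t0 t1 -> ex_RInt g t0 t1 ->
  RInt (fun t => c * f t + d * g t) t0 t1 = c * RInt f t0 t1 + d * RInt g t0 t1.
Proof.
  intros Hf Hg.
  rewrite (RInt_plus (fun t => c * f t) (fun t => d * g t)).
  - rewrite (RInt_scal f), (RInt_scal g) by auto. reflexivity.
  - apply (ex_RInt_scal f); auto.
  - apply (ex_RInt_scal g); auto.
Qed.

Lemma ex_RInt_lin (f g : R -> R) c d t0 t1 :
  ex_RInt f t0 t1 -> ex_RInt g t0 t1 -> ex_RInt (fun t => c * f t + d * g t) t0 t1.
Proof.
  intros Hf Hg. apply (ex_RInt_plus (fun t => c * f t) (fun t => d * g t)).
  - apply (ex_RInt_scal f); exact Hf.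
  - apply (ex_RInt_scal g); exact Hg.
Qed.

Lemma RInt_sum (F : nat -> R -> R) N t0 t1 :
  (forall i, ex_RInt (F i) t0 t1) ->
  ex_RInt (fun t => sum_f_R0 (fun i => F i t) N) t0 t1 /\
  RInt (fun t => sum_f_R0 (fun i => F i t) N) t0 t1 = sum_f_R0 (fun i => RInt (F i) t0 t1) N.
Proof.
  intro H. induction N as [|N IH]; simpl.
  - split; [apply H | reflexivity].
  - destruct IH as [IH1 IH2]. split.
    + apply (ex_RInt_plus (fun t => sum_f_R0 (fun i => F i t) N) (F (S N))); auto.
    + rewrite (RInt_plus (fun t => sum_f_R0 (fun i => F i t) N) (F (S N))) by auto.
      rewrite IH2. reflexivity.
Qed.

Lemma oint_RInt f t0 t1 : ex_RInt f t0 t1 -> oint f t0 t1 = RInt f t0 t1.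
Proof.
  intro H. unfold oint, RI.
  destruct (Rle_dec t0 t1).
  - destruct (constructive_indefinite_description _ _) as [l Hl]. simpl.
    rewrite <- (Hl (ex_RInt_Reals_0 f t0 t1 H)). symmetry. apply RInt_Reals.
  - destruct (constructive_indefinite_description _ _) as [l Hl]. simpl.
    pose proof (ex_RInt_swap _ _ _ H) as H'.
    rewrite <- (Hl (ex_RInt_Reals_0 f t1 t0 H')), <- (RInt_Reals f t1 t0).
    rewrite <- (opp_RInt_swap f t0 t1 H). unfold opp; simpl; ring.
Qed.

Lemma sum_comb (f g : nat -> R) N x y :
  sum_f_R0 f N * x + - sum_f_R0 g N * y = sum_f_R0 (fun i => f i * x + - g i * y) N.
Proof. induction N as [|N IH]; simpl; [| rewrite <- IH]; ring. Qed.

Lemma mon_ibp h a b t0 t1 :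
  mon h a b t1 - mon h a b t0 =
  INR b * RInt (mon h (S a) (pred b)) t0 t1 - INR a * RInt (mon h (pred a) (S b)) t0 t1.
Proof.
  assert (Hftc : RInt (fun t => INR b * mon h (S a) (pred b) t + (- INR a) * mon h (pred a) (S b) t) t0 t1
                 = mon h a b t1 - mon h a b t0).
  { apply is_RInt_unique.
    replace (fun t => _ + _) with (fun t => INR b * mon h (S a) (pred b) t - INR a * mon h (pred a) (S b) t)
      by (apply functional_extensionality; intro; ring).
    apply (is_RInt_derive (mon h a b)).
    - intros; apply mon_derive.
    - intros. apply (@ex_derive_continuous R_AbsRing R_NormedModule).
      unfold mon, cx, cy. auto_derive. auto. }
  rewrite <- Hftc, RInt_lin by apply ex_RInt_mon. ring.
Qed.

Lemma circle h t : 0 <= h -> cx h t ^ 2 + cy h t ^ 2 = h.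
Proof.
  intro Hh. unfold cx, cy.
  replace ((sqrt h * cos t) ^ 2 + (sqrt h * sin t) ^ 2)
    with (sqrt h * sqrt h * (sin t * sin t + cos t * cos t)) by ring.
  pose proof (sin2_cos2 t) as Hsc. unfold Rsqr in Hsc.
  rewrite sqrt_sqrt, Hsc by exact Hh. ring.
Qed.

Lemma mon_circle h p q t : 0 <= h ->
  mon h p (S (S q)) t = h * mon h p q t + (-1) * mon h (S (S p)) q t.
Proof.
  intro Hh. pose proof (circle h t Hh) as C. unfold mon.
  set (X := cx h t) in *. set (Y := cy h t) in *. rewrite <- C. simpl. ring.
Qed.

Fixpoint ladd (l1 l2 : list R) : list R :=
  match l1, l2 with
  | nil, _ => l2
  | _, nil => l1
  | c1 :: l1', c2 :: l2' => (c1 + c2) :: ladd l1' l2'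
  end.

Definition lscal (c : R) (l : list R) : list R := map (Rmult c) l.

Definition lshift (k : nat) (l : list R) : list R := repeat 0 k ++ l.

Lemma peval_ladd l1 l2 x : peval (ladd l1 l2) x = peval l1 x + peval l2 x.
Proof.
  revert l2; induction l1 as [|c1 l1 IH]; intros [|c2 l2]; simpl; try ring.
  rewrite IH. ring.
Qed.

Lemma peval_lscal c l x : peval (lscal c l) x = c * peval l x.
Proof. induction l as [|c' l IH]; simpl; [| rewrite IH]; ring. Qed.

Lemma peval_lshift k l x : peval (lshift k l) x = x ^ k * peval l x.
Proof. unfold lshift. induction k as [|k IH]; simpl; [| rewrite IH]; ring. Qed.

Lemma deg_le_ladd l1 l2 d : deg_le l1 d -> deg_le l2 d -> deg_le (ladd l1 l2) d.
Proof.
  assert (Hlen : length (ladd l1 l2) = Nat.max (length l1) (length l2)).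
  { revert l2; induction l1 as [|c1 l1 IH]; intros [|c2 l2]; simpl; auto. }
  unfold deg_le. rewrite Hlen. lia.
Qed.

Lemma deg_le_lscal c l d : deg_le l d -> deg_le (lscal c l) d.
Proof. unfold deg_le, lscal. rewrite length_map. auto. Qed.

Lemma deg_le_lshift k l d : deg_le l d -> deg_le (lshift k l) (d + Z.of_nat k).
Proof. unfold deg_le, lshift. rewrite length_app, repeat_length. lia. Qed.

Lemma deg_le_mono d d' l : (d <= d')%Z -> deg_le l d -> deg_le l d'.
Proof. unfold deg_le. lia. Qed.

Lemma u_nonneg h : 0 <= u h.
Proof. apply sqrt_pos. Qed.

Lemma u_quartic h : 0 < h -> u h ^ 4 + u h ^ 2 = h.
Proof.
  intro Hh.
  assert (Hs : sqrt (1 + 4 * h) * sqrt (1 + 4 * h) = 1 + 4 * h) by (apply sqrt_sqrt; lra).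
  assert (Hge : 1 <= sqrt (1 + 4 * h)).
  { rewrite <- sqrt_1 at 1. apply sqrt_le_1_alt. lra. }
  assert (Hu2 : u h ^ 2 = (sqrt (1 + 4 * h) - 1) / 2).
  { unfold u. simpl. rewrite Rmult_1_r, sqrt_sqrt; lra. }
  replace (u h ^ 4) with ((u h ^ 2) ^ 2) by ring. rewrite Hu2. nra.
Qed.

(** All of M(h) will be shown to have
    this form, so that beta = gamma = 0 in the theorem. *)
Definition Repr (da dp : Z) (F : R -> R) : Prop :=
  exists al de ph, deg_le al da /\ deg_le de da /\ deg_le ph dp /\
    forall h, 0 < h -> F h = peval al h * Iij 0 1 h + peval de h * Jij 0 1 h + peval ph (u h).

Lemma Repr_mono da dp da' dp' F :
  (da <= da')%Z -> (dp <= dp')%Z -> Repr da dp F -> Repr da' dp' F.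
Proof.
  intros H1 H2 (al & de & ph & A1 & A2 & A3 & A4).
  exists al, de, ph. repeat split; auto; eapply deg_le_mono; eauto.
Qed.

Lemma Repr_ext da dp F G : (forall h, 0 < h -> F h = G h) -> Repr da dp G -> Repr da dp F.
Proof.
  intros H (al & de & ph & A1 & A2 & A3 & A4).
  exists al, de, ph. repeat split; auto. intros h Hh. rewrite H by exact Hh. auto.
Qed.

Lemma Repr_zero da dp : (-1 <= da)%Z -> (-1 <= dp)%Z -> Repr da dp (fun _ => 0).
Proof.
  intros. exists nil, nil, nil. unfold deg_le; simpl. repeat split; try lia.
  intros. ring.
Qed.

Lemma Repr_comb da dp F G c1 c2 :
  Repr da dp F -> Repr da dp G -> Repr da dp (fun h => c1 * F h + c2 * G h).
Proof.
  intros (al & de & ph & A1 & A2 & A3 & A4) (al' & de' & ph' & B1 & B2 & B3 & B4).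
  exists (ladd (lscal c1 al) (lscal c2 al')), (ladd (lscal c1 de) (lscal c2 de')),
    (ladd (lscal c1 ph) (lscal c2 ph')).
  repeat split; try (apply deg_le_ladd; apply deg_le_lscal; auto).
  intros h Hh. rewrite A4, B4 by exact Hh. rewrite !peval_ladd, !peval_lscal. ring.
Qed.

Lemma Repr_scal da dp c F : Repr da dp F -> Repr da dp (fun h => c * F h).
Proof.
  intro HF. apply (Repr_ext _ _ _ (fun h => c * F h + 0 * F h)).
  - intros; ring.
  - apply Repr_comb; exact HF.
Qed.

Lemma Repr_add da dp F G : Repr da dp F -> Repr da dp G -> Repr da dp (fun h => F h + G h).
Proof.
  intros HF HG. apply (Repr_ext _ _ _ (fun h => 1 * F h + 1 * G h)).
  - intros; ring.
  - apply Repr_comb; auto.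
Qed.

Lemma Repr_sum da dp (F : nat -> R -> R) N :
  (forall i, (i <= N)%nat -> Repr da dp (F i)) ->
  Repr da dp (fun h => sum_f_R0 (fun i => F i h) N).
Proof.
  intro H. induction N as [|N IH]; simpl.
  - apply H. lia.
  - apply (Repr_add _ _ (fun h => sum_f_R0 (fun i => F i h) N) (F (S N))).
    + apply IH. intros; apply H; lia.
    + apply H; lia.
Qed.

Lemma Repr_upow da dp c k :
  (-1 <= da)%Z -> (Z.of_nat k <= dp)%Z -> Repr da dp (fun h => c * u h ^ k).
Proof.
  intros. exists nil, nil, (lshift k (c :: nil)). repeat split.
  - unfold deg_le; simpl; lia.
  - unfold deg_le; simpl; lia.
  - apply (deg_le_mono (0 + Z.of_nat k)); [lia |].
    apply deg_le_lshift. unfold deg_le; simpl; lia.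
  - intros. rewrite peval_lshift. simpl. ring.
Qed.

(** Multiplication by h raises da by 1 and dp by 4, because h = u^4 + u^2. *)
Lemma Repr_mulh da dp F : Repr da dp F -> Repr (da + 1) (dp + 4) (fun h => h * F h).
Proof.
  intros (al & de & ph & A1 & A2 & A3 & A4).
  exists (lshift 1 al), (lshift 1 de), (ladd (lshift 2 ph) (lshift 4 ph)).
  repeat split; try (apply deg_le_lshift; assumption).
  - apply deg_le_ladd; eapply deg_le_mono; try (apply deg_le_lshift; eassumption); lia.
  - intros h Hh. rewrite A4 by exact Hh. rewrite peval_ladd, !peval_lshift.
    replace (u h ^ 2 * peval ph (u h) + u h ^ 4 * peval ph (u h))
      with ((u h ^ 4 + u h ^ 2) * peval ph (u h)) by ring.
    rewrite u_quartic by exact Hh. ring.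
Qed.

(** [corner t sx sy]: the point of angle t h on Gamma_h is (sx u(h), sy u(h)^2), i.e. one
    of the four intersection points A, B, C, D of Gamma_h with the parabolas y = +-x^2. *)
Definition corner (t : R -> R) (sx sy : R) : Prop :=
  forall h, 0 < h -> cx h (t h) = sx * u h /\ cy h (t h) = sy * u h ^ 2.

Definition cbound (d : nat) : Z := ((Z.of_nat d - 2) / 2)%Z.
Definition ubound (d : nat) : Z := (2 * Z.of_nat d - 1 + Z.of_nat d mod 2)%Z.

Ltac zbound := unfold cbound, ubound in *; Z.to_euclidean_division_equations; lia.

Definition coef_deg (n : nat) : Z := ((Z.of_nat n - 1) / 2)%Z.
Definition phi_deg (n : nat) : Z := (2 * Z.of_nat n + (3 + (-1) ^ Z.of_nat n) / 2)%Z.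

Lemma parity_term n : ((3 + (-1) ^ Z.of_nat n) / 2 = 2 - Z.of_nat n mod 2)%Z.
Proof.
  destruct (Nat.Even_or_Odd n) as [[m ->] | [m ->]];
    rewrite ?Nat2Z.inj_add, Nat2Z.inj_mul, ?Z.pow_add_r, Z.pow_mul_r by lia;
    change ((-1) ^ Z.of_nat 2)%Z with 1%Z; rewrite Z.pow_1_l by lia;
    Z.to_euclidean_division_equations; lia.
Qed.

Lemma bounds_le n d : (1 <= d)%nat -> (d <= S n)%nat ->
  (cbound d <= coef_deg n)%Z /\ (ubound d <= phi_deg n)%Z.
Proof. intros. unfold coef_deg, phi_deg. rewrite parity_term. split; zbound. Qed.

Section ArcIntegrals.

Variables t0 t1 : R -> R.

Definition K (p q : nat) (h : R) : R := RInt (mon h p q) (t0 h) (t1 h).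

Definition E (p q : nat) (h : R) : R := mon h p q (t1 h) - mon h p q (t0 h).

Lemma K_ibp a b h : E a b h = INR b * K (S a) (pred b) h - INR a * K (pred a) (S b) h.
Proof. apply mon_ibp. Qed.

Lemma K_circle p q h : 0 <= h -> K p (S (S q)) h = h * K p q h - K (S (S p)) q h.
Proof.
  intro Hh. unfold K.
  rewrite (RInt_ext _ (fun t => h * mon h p q t + (-1) * mon h (S (S p)) q t))
    by (intros; apply mon_circle; exact Hh).
  rewrite RInt_lin by apply ex_RInt_mon. ring.
Qed.

Lemma K_rec_x r q h : 0 <= h ->
  K (S (S r)) q h = (E (S r) (S q) h + INR (S r) * h * K r q h) / INR (S (S r) + q).
Proof.
  intro Hh. rewrite K_ibp. simpl pred. rewrite K_circle by exact Hh.
  pose proof (pos_INR r). pose proof (pos_INR q).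
  rewrite plus_INR, !S_INR. field. lra.
Qed.

Lemma K_rec_y p s h : 0 <= h ->
  K p (S (S s)) h = (INR (S s) * h * K p s h - E (S p) (S s) h) / INR (p + S (S s)).
Proof.
  intro Hh. rewrite K_ibp. simpl pred. rewrite K_circle by exact Hh.
  pose proof (pos_INR p). pose proof (pos_INR s).
  rewrite plus_INR, !S_INR. field. lra.
Qed.

Lemma K_00 h : K 0 0 h = t1 h - t0 h.
Proof.
  unfold K, mon. simpl.
  replace (fun _ : R => 1 * 1) with (fun _ : R => 1)
    by (apply functional_extensionality; intro; ring).
  rewrite RInt_const. unfold scal; simpl. unfold mult; simpl. ring.
Qed.

Lemma K_10 h : K 1 0 h = E 0 1 h.
Proof. rewrite K_ibp. simpl. ring. Qed.

Lemma K_01 h : K 0 1 h = - E 1 0 h.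
Proof. rewrite K_ibp. simpl. ring. Qed.

Lemma K_11 h : K 1 1 h = E 0 2 h / 2.
Proof. rewrite K_ibp. simpl. field. Qed.

Lemma on_arc_RInt P Q h F :
  ex_RInt F (t0 h) (t1 h) ->
  (forall t, P (cx h t) (cy h t) * dcx h t + Q (cx h t) (cy h t) * dcy h t = F t) ->
  on_arc (fun h => (t0 h, t1 h)) P Q h = RInt F (t0 h) (t1 h).
Proof.
  intros Hex HF. unfold on_arc, arc_int. simpl.
  rewrite (functional_extensionality _ _ HF). apply oint_RInt. exact Hex.
Qed.

Lemma on_arc_poly2 n c d h :
  on_arc (fun h => (t0 h, t1 h)) (poly2 n c) (fun x y => - poly2 n d x y) h =
  sum_f_R0 (fun i => sum_f_R0 (fun j =>
    - c i j * K i (S j) h + - d i j * K (S i) j h) (n - i)) n.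
Proof.
  set (T i j t := - c i j * mon h i (S j) t + - d i j * mon h (S i) j t).
  assert (HT : forall i j, ex_RInt (T i j) (t0 h) (t1 h))
    by (intros; apply ex_RInt_lin; apply ex_RInt_mon).
  assert (Hrow : forall i, ex_RInt (fun t => sum_f_R0 (fun j => T i j t) (n - i)) (t0 h) (t1 h))
    by (intro i; apply (RInt_sum (T i)); auto).
  destruct (RInt_sum (fun i t => sum_f_R0 (fun j => T i j t) (n - i)) n (t0 h) (t1 h) Hrow)
    as [Hex Hsum].
  rewrite (on_arc_RInt _ _ _ _ Hex).
  - rewrite Hsum. apply sum_eq. intros i _.
    destruct (RInt_sum (T i) (n - i) (t0 h) (t1 h) (HT i)) as [_ ->].
    apply sum_eq. intros j _. unfold T, K. apply RInt_lin; apply ex_RInt_mon.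
  - intro t. unfold poly2. rewrite sum_comb. apply sum_eq. intros i _.
    rewrite sum_comb. apply sum_eq. intros j _.
    unfold T, mon, dcx, dcy, cx, cy. simpl. ring.
Qed.

Lemma on_arc_y h :
  on_arc (fun h => (t0 h, t1 h)) (fun x y => x ^ 0 * y ^ 1) zero2 h = - K 0 2 h.
Proof.
  rewrite (on_arc_RInt _ _ _ (fun t => (-1) * mon h 0 2 t + 0 * mon h 0 2 t)).
  - unfold K. rewrite RInt_lin by apply ex_RInt_mon. ring.
  - apply ex_RInt_lin; apply ex_RInt_mon.
  - intro t. unfold zero2, mon, dcx, cy. simpl. ring.
Qed.

Variables sx0 sy0 sx1 sy1 : R.
Hypothesis start_corner : corner t0 sx0 sy0.
Hypothesis end_corner : corner t1 sx1 sy1.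

Lemma E_corner a b h : 0 < h ->
  E a b h = (sx1 ^ a * sy1 ^ b - sx0 ^ a * sy0 ^ b) * u h ^ (a + 2 * b).
Proof.
  intro Hh. unfold E, mon.
  destruct (start_corner h Hh) as [-> ->]. destruct (end_corner h Hh) as [-> ->].
  rewrite !Rpow_mult_distr, pow_add, pow_mult. ring.
Qed.

Lemma Repr_E a b da dp :
  (-1 <= da)%Z -> (Z.of_nat (a + 2 * b) <= dp)%Z -> Repr da dp (E a b).
Proof.
  intros. apply (Repr_ext _ _ _ (fun h => (sx1 ^ a * sy1 ^ b - sx0 ^ a * sy0 ^ b) * u h ^ (a + 2 * b))).
  - intros; apply E_corner; assumption.
  - apply Repr_upow; assumption.
Qed.

Lemma angle_repr : Repr 0 3 (fun h => - K 0 2 h) -> Repr 0 3 (fun h => h * (t1 h - t0 h)).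
Proof.
  intro HK. apply (Repr_ext _ _ _ (fun h => (-2) * (- K 0 2 h) + 1 * E 1 1 h)).
  - intros h Hh. rewrite K_rec_y, K_00 by lra. simpl. field.
  - apply Repr_comb; [exact HK | apply Repr_E; simpl; lia].
Qed.

(** The corners' y-signs have equal squares (so that E(0,2) = 0), and h times the angle
    of the arc is representable; both hold for all four arcs of M(h). *)
Hypothesis corners_level : sy0 ^ 2 = sy1 ^ 2.
Hypothesis angle : Repr 0 3 (fun h => h * (t1 h - t0 h)).

(** Base cases K(1,0), K(0,1), K(1,1) (the last vanishes since sy0^2 = sy1^2). *)
Lemma K_repr_base p q : (p <= 1)%nat -> (q <= 1)%nat -> (1 <= p + q)%nat ->
  Repr (cbound (p + q)) (ubound (p + q)) (K p q).
Proof.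
  intros Hp Hq Hpq. destruct p as [|[|]], q as [|[|]]; try lia.
  - apply (Repr_ext _ _ _ (fun h => (-1) * E 1 0 h)); [intros; rewrite K_01; ring |].
    apply Repr_scal, Repr_E; zbound.
  - apply (Repr_ext _ _ _ (fun h => 1 * E 0 1 h)); [intros; rewrite K_10; ring |].
    apply Repr_scal, Repr_E; zbound.
  - apply (Repr_ext _ _ _ (fun _ => 0)); [| apply Repr_zero; zbound].
    intros h Hh. rewrite K_11, E_corner, corners_level by exact Hh. simpl. field.
Qed.

Lemma K_repr d p q : (1 <= d)%nat -> (p + q = d)%nat -> Repr (cbound d) (ubound d) (K p q).
Proof.
  revert p q. induction d as [d IH] using lt_wf_ind. intros p q Hd Hpq.
  assert (HhK : forall p' q', (p' + q' + 2 = d)%nat ->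
            Repr (cbound d) (ubound d) (fun h => h * K p' q' h)).
  { intros p' q' Hd'. destruct (Nat.eq_dec (p' + q') 0) as [H0 | H0].
    - replace p' with 0%nat by lia. replace q' with 0%nat by lia.
      apply (Repr_ext _ _ _ (fun h => h * (t1 h - t0 h))); [intros; rewrite K_00; reflexivity |].
      apply (Repr_mono 0 3); [zbound | zbound | exact angle].
    - apply (Repr_mono (cbound (p' + q') + 1) (ubound (p' + q') + 4)); try zbound.
      apply Repr_mulh, IH; lia. }
  assert (HINR : INR d <> 0) by (apply not_0_INR; lia).
  destruct (le_lt_dec 2 p) as [Hp | Hp]; [| destruct (le_lt_dec 2 q) as [Hq | Hq]].
  - destruct p as [|[|r]]; try lia.
    apply (Repr_ext _ _ _ (fun h => / INR d * E (S r) (S q) h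
                                      + (INR (S r) / INR d) * (h * K r q h))).
    + intros h Hh. rewrite K_rec_x by lra. subst d. field. exact HINR.
    + apply Repr_comb; [apply Repr_E; zbound | apply HhK; lia].
  - destruct q as [|[|s]]; try lia.
    apply (Repr_ext _ _ _ (fun h => (INR (S s) / INR d) * (h * K p s h)
                                      + (- / INR d) * E (S p) (S s) h)).
    + intros h Hh. rewrite K_rec_y by lra. subst d. field. exact HINR.
    + apply Repr_comb; [apply HhK; lia | apply Repr_E; zbound].
  - subst d. apply K_repr_base; lia.
Qed.

Lemma arc_repr n c d :
  Repr (coef_deg n) (phi_deg n)
    (fun h => on_arc (fun h => (t0 h, t1 h)) (poly2 n c) (fun x y => - poly2 n d x y) h).
Proof.
  apply (Repr_ext _ _ _ _ (fun h _ => on_arc_poly2 n c d h)).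
  apply (Repr_sum _ _ (fun i h => sum_f_R0 (fun j =>
           - c i j * K i (S j) h + - d i j * K (S i) j h) (n - i))).
  intros i Hi.
  apply (Repr_sum _ _ (fun j h => - c i j * K i (S j) h + - d i j * K (S i) j h)).
  intros j Hj. destruct (bounds_le n (i + S j)) as [B1 B2]; try lia.
  apply Repr_comb; apply (Repr_mono _ _ _ _ _ B1 B2); apply K_repr; lia.
Qed.

End ArcIntegrals.

(** Geometry of the corners: A has angle atan u(h), since sqrt h = u sqrt(1+u^2). *)
Lemma sqrt_h_u h : 0 < h -> sqrt h = u h * sqrt (1 + (u h)²).
Proof.
  intro Hh.
  assert (Hq : (u h)² * (1 + (u h)²) = h).
  { transitivity (u h ^ 4 + u h ^ 2); [unfold Rsqr; ring | exact (u_quartic h Hh)]. }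
  rewrite <- Hq at 1.
  rewrite sqrt_mult_alt by apply Rle_0_sqr.
  rewrite sqrt_Rsqr by apply u_nonneg. reflexivity.
Qed.

Lemma corner_A : corner angA 1 1.
Proof.
  intros h Hh. unfold cx, cy, angA. rewrite cos_atan, sin_atan, sqrt_h_u by exact Hh.
  assert (0 < sqrt (1 + (u h)²)) by (apply sqrt_lt_R0; pose proof (Rle_0_sqr (u h)); lra).
  split; field; lra.
Qed.

Lemma corner_B : corner (fun h => - angA h) 1 (-1).
Proof.
  intros h Hh. destruct (corner_A h Hh) as [Hx Hy]. unfold cx, cy in *.
  rewrite cos_neg, sin_neg. split; lra.
Qed.

Lemma corner_C : corner (fun h => - PI + angA h) (-1) (-1).
Proof.
  intros h Hh. destruct (corner_A h Hh) as [Hx Hy]. unfold cx, cy in *.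
  replace (- PI + angA h) with (angA h - PI) by ring.
  rewrite cos_minus, sin_minus, cos_PI, sin_PI. split; nra.
Qed.

Lemma corner_D : corner (fun h => - PI - angA h) (-1) 1.
Proof.
  intros h Hh. destruct (corner_A h Hh) as [Hx Hy]. unfold cx, cy in *.
  replace (- PI - angA h) with (- (angA h + PI)) by ring.
  rewrite cos_neg, sin_neg, cos_plus, sin_plus, cos_PI, sin_PI. split; nra.
Qed.

Lemma corner_A' : corner (fun h => - 2 * PI + angA h) 1 1.
Proof.
  intros h Hh. destruct (corner_A h Hh) as [Hx Hy]. unfold cx, cy in *.
  replace (- 2 * PI + angA h) with (angA h - 2 * PI) by ring.
  rewrite cos_minus, sin_minus, cos_2PI, sin_2PI. split; nra.
Qed.

Lemma I01_repr : Repr 0 3 (Iij 0 1).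
Proof.
  exists (1 :: nil), nil, nil. unfold deg_le; simpl. repeat split; try lia.
  intros. ring.
Qed.

Lemma J01_repr : Repr 0 3 (Jij 0 1).
Proof.
  exists nil, (1 :: nil), nil. unfold deg_le; simpl. repeat split; try lia.
  intros. ring.
Qed.

(** The angles of the arcs AB and BC (those of CD and DA are the same). *)
Lemma angle_AB : Repr 0 3 (fun h => h * (- angA h - angA h)).
Proof.
  apply (angle_repr angA (fun h => - angA h) 1 1 1 (-1) corner_A corner_B).
  apply (Repr_ext _ _ _ _ (fun h _ => eq_sym (on_arc_y angA (fun h => - angA h) h))).
  exact I01_repr.
Qed.

Lemma angle_BC : Repr 0 3 (fun h => h * ((- PI + angA h) - - angA h)).
Proof.
  apply (angle_repr (fun h => - angA h) (fun h => - PI + angA h) 1 (-1) (-1) (-1) corner_B corner_C).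
  apply (Repr_ext _ _ _ _ (fun h _ => eq_sym (on_arc_y (fun h => - angA h) (fun h => - PI + angA h) h))).
  exact J01_repr.
Qed.

Theorem lemma2p3 (n : nat) (a b : nat -> nat -> nat -> R) :
  (1 <= n)%nat ->
  exists (alpha beta gamma delta phi : list R),
    deg_le alpha ((Z.of_nat n - 1) / 2)%Z /\
    deg_le delta ((Z.of_nat n - 1) / 2)%Z /\
    deg_le beta ((Z.of_nat n - 2) / 2)%Z /\
    deg_le gamma (Z.of_nat n / 2)%Z /\
    deg_le phi (2 * Z.of_nat n + (3 + (-1) ^ Z.of_nat n) / 2)%Z /\
    forall h : R, 0 < h ->
      M n a b h =
        peval alpha h * Iij 0 1 h + peval beta h * Iij 1 1 h
        + peval gamma h * Jij 0 0 h + peval delta h * Jij 0 1 h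
        + peval phi (u h).
Proof.
  intro Hn.
  assert (HM : Repr (coef_deg n) (phi_deg n) (M n a b)).
  { unfold M. cbv zeta. repeat apply Repr_add.
    - apply (arc_repr angA (fun h => - angA h) 1 1 1 (-1) corner_A corner_B);
        [ring | exact angle_AB].
    - apply (arc_repr (fun h => - angA h) (fun h => - PI + angA h) 1 (-1) (-1) (-1)
               corner_B corner_C); [ring | exact angle_BC].
    - apply (arc_repr (fun h => - PI + angA h) (fun h => - PI - angA h) (-1) (-1) (-1) 1
               corner_C corner_D); [ring |].
      apply (Repr_ext _ _ _ (fun h => h * (- angA h - angA h))); [intros; ring | exact angle_AB].
    - apply (arc_repr (fun h => - PI - angA h) (fun h => - 2 * PI + angA h) (-1) 1 1 1
               corner_D corner_A'); [ring |].
      apply (Repr_ext _ _ _ (fun h => h * ((- PI + angA h) - - angA h))); [intros; ring |].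
      exact angle_BC. }
  destruct HM as (alpha & delta & phi & Halpha & Hdelta & Hphi & HMh).
  exists alpha, nil, nil, delta, phi. repeat split; try assumption.
  - unfold deg_le; simpl. Z.to_euclidean_division_equations; lia.
  - unfold deg_le; simpl. Z.to_euclidean_division_equations; lia.
  - intros h Hh. rewrite HMh by exact Hh. simpl. ring.
Qed.
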